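(* Let $B$ be a nonzero real vector space, $\lfloor\cdot,\cdot\rfloor$ a symmetric bilinear form on $B$, $q(b):=\tfrac12\lfloor b,b\rfloor$, and let $f$ be a BC--function on $B$. Then ${\cal P}_q(f^@)={\cal P}_q(f)$.
   Context: For a proper convex $f\colon B\to\,]{-}\infty,\infty]$, $f^@(c):=\sup_{b\in B}[\lfloor b,c\rfloor-f(b)]$. A BC--function is a proper convex $f\colon B\to\,]{-}\infty,\infty]$ with $f^@(b)\ge f(b)\ge q(b)$ for all $b\in B$. For a function $h\ge q$ on $B$, ${\cal P}_q(h):=\{b\in B\colon h(b)=q(b)\}$. *)

From mathcomp Require Import all_boot all_order all_algebra.
From mathcomp Require Import all_classical all_reals ereal.
Set Implicit Arguments. Unset Strict Implicit. Unset Printing Implicit Defensive.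
Import Order.TTheory GRing.Theory Num.Theory.
Local Open Scope ring_scope.
Local Open Scope classical_set_scope.
Local Open Scope ereal_scope.

(* A real vector space B is an lmodType R with R : realType.
   Functions B -> ]-oo, +oo] are modelled as B -> \bar R never taking -oo. *)

Section BC.
Variables (R : realType) (B : lmodType R).

Definition sym_bilinear (bf : B -> B -> R) : Prop :=
  (forall a b, bf a b = bf b a) /\
  (forall a b c, bf (a + b)%R c = (bf a c + bf b c)%R) /\
  (forall (l : R) a c, bf (l *: a)%R c = (l * bf a c)%R).

Definition qform (bf : B -> B -> R) (b : B) : R := (bf b b / 2)%R.

Definition proper_fun (f : B -> \bar R) : Prop :=
  (forall b, f b != -oo) /\ (exists b, f b != +oo).

Definition convex_fun (f : B -> \bar R) : Prop :=
  forall (a b : B) (l : R), (0 < l < 1)%R ->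
    f (l *: a + (1 - l) *: b)%R <= (l%:E * f a + (1 - l)%:E * f b).

Definition fat (bf : B -> B -> R) (f : B -> \bar R) (c : B) : \bar R :=
  ereal_sup [set ((bf b c)%:E - f b) | b in [set: B]].

Definition BC_function (bf : B -> B -> R) (f : B -> \bar R) : Prop :=
  proper_fun f /\ convex_fun f /\
  (forall b, fat bf f b >= f b) /\ (forall b, f b >= (qform bf b)%:E).

Definition Pq (bf : B -> B -> R) (h : B -> \bar R) : set B :=
  [set b | h b = (qform bf b)%:E].

End BC.

From mathcomp Require Import all_boot all_order all_algebra.
From mathcomp Require Import all_classical all_reals ereal.
From mathcomp Require Import ring lra.
Import Order.TTheory GRing.Theory Num.Theory.
Local Open Scope ring_scope.

(* Since f >= q and f <= f^@, a point where f^@ = q also has f = q.  Conversely, if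
   f b = q b then, for every c and t in (0,1), convexity of f and q <= f give
   q (b + t (c - b)) <= q b + t (f c - q b); expanding q, dividing by t and letting
   t -> 0 yields [c, b] - f c <= q b, i.e. f^@ b <= q b. *)

Lemma le0_of_perturbed_le0 (R : realFieldType) (a K : R) :
  (forall t : R, 0 < t < 1 -> a + t * K <= 0) -> a <= 0.
Proof.
move=> H; apply/ler_addgt0Pr => e e0; rewrite add0r.
have K1 : 0 < `|K| + 1 by rewrite ltr_wpDl.
pose t := Num.min (2^-1) (e / (`|K| + 1)).
have t0 : 0 < t by rewrite lt_min invr_gt0 ltr0n divr_gt0.
have t1 : t < 1 by rewrite gt_min invf_lt1 ?ltr1n.
have te : t * (`|K| + 1) <= e by rewrite -ler_pdivlMr // ge_min lexx orbT.
have tK : - (t * K) <= t * `|K|.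
  by rewrite -mulrN; apply: ler_wpM2l; [exact: ltW | rewrite ler_normr lexx orbT].
have := H t; rewrite t0 t1 => /(_ isT); nra.
Qed.

Section SymBilinear.
Variables (R : realType) (B : lmodType R) (bf : B -> B -> R).
Hypothesis bf_sym : sym_bilinear bf.

(* The coefficient of [t ^+ 2] is q (c - b). *)
Lemma qform_convex_comb (b c : B) (t : R) :
  qform bf (t *: c + (1 - t) *: b) =
  qform bf b + t * (bf c b - bf b b) + t ^+ 2 * (qform bf c - bf c b + qform bf b).
Proof.
case: bf_sym => [sym [addl scalel]].
have addr a x y : bf a (x + y) = bf a x + bf a y by rewrite sym addl -!(sym a).
have scaler (l : R) a x : bf a (l *: x) = l * bf a x by rewrite sym scalel sym.
rewrite /qform !addl !addr !scalel !scaler (sym b c).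
by field.
Qed.

Local Open Scope ereal_scope.

Variable f : B -> \bar R.
Hypotheses (f_ninfty : forall b, f b != -oo) (f_convex : convex_fun f)
  (f_ge_qform : forall b, (qform bf b)%:E <= f b).

Lemma bf_sub_le_qform (b c : B) : f b = (qform bf b)%:E ->
  (bf c b)%:E - f c <= (qform bf b)%:E.
Proof.
move=> fb; case fc: (f c) (f_ninfty c) => [r| |] // _; last by rewrite addeNy leNye.
rewrite -EFinD lee_fin -subr_le0.
apply: (@le0_of_perturbed_le0 _ _ (qform bf c - bf c b + qform bf b)) => t t01.
have := le_trans (f_ge_qform (t *: c + (1 - t) *: b)%R) (f_convex c b t t01).
rewrite fc fb -!EFinM -EFinD lee_fin qform_convex_comb.
rewrite -(pmulr_rle0 _ (andP t01).1) /qform expr2; nra.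
Qed.

Lemma fat_le_qform (b : B) : f b = (qform bf b)%:E -> fat bf f b <= (qform bf b)%:E.
Proof. by move=> fb; apply: ub_ereal_sup => _ [c _ <-]; exact: bf_sub_le_qform. Qed.

End SymBilinear.

Local Open Scope ereal_scope.

Theorem lemma3p10 (R : realType) (B : lmodType R) (bf : B -> B -> R)
  (f : B -> \bar R) :
  (exists b : B, b != 0%R) ->
  sym_bilinear bf ->
  BC_function bf f ->
  Pq bf (fat bf f) = Pq bf f.
Proof.
move=> _ bf_sym [[f_ninfty _] [f_convex [f_le_fat f_ge_qform]]].
apply/seteqP; split=> b hb; apply/le_anti.
- by rewrite f_ge_qform andbT -hb f_le_fat.
- by rewrite fat_le_qform // -hb f_le_fat.
Qed.
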